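(* Let $\mathcal{X}\subset\mathbb{R}^d$ be nonempty, closed, convex and compact with diameter $D:=\max_{x,y\in\mathcal{X}}\|x-y\|$. Let $\Phi:\mathcal{X}\to\mathbb{R}$ be differentiable with $L$-Lipschitz gradient, and set $G:=\max_{x\in\mathcal{X}}\|\nabla\Phi(x)\|$, $\Phi_{\max}:=\max_{\mathcal{X}}\Phi$, $\Phi_{\min}:=\min_{\mathcal{X}}\Phi$. Let $F(x)=-\nabla\Phi(x)+R(x)$ on $\mathcal{X}$. Let $0<\eta\le 1/L$ and run $x_{t+1}=\operatorname{Proj}_{\mathcal{X}}(x_t+\eta\nabla\Phi(x_t))$, $t=0,\dots,T-1$, from $x_0\in\mathcal{X}$. Let $\tilde t$ be uniformly distributed on $\{0,\dots,T-1\}$, independent of the iterates, and output $\tilde x_T:=x_{\tilde t}$; assume $R$ is square-integrable under the law of $\tilde x_T$ and define $E_T:=(\mathbb{E}[\|R(\tilde x_T)\|^2])^{1/2}$. Then $$\mathbb{E}[\operatorname{Gap}(\tilde x_T)]\le (D+\eta G)\sqrt{\frac{2(\Phi_{\max}-\Phi_{\min})}{T\eta}}+DE_T.$$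
   Context: For $\bar x\in\mathcal{X}$, the duality gap of $F$ is $\operatorname{Gap}(\bar x):=\max_{x\in\mathcal{X}}\langle F(\bar x),\bar x-x\rangle$ with the Euclidean inner product. $\operatorname{Proj}_{\mathcal{X}}$ is Euclidean projection onto $\mathcal{X}$. *)

From HB Require Import structures.
From mathcomp Require Import all_boot all_order all_algebra.
From mathcomp Require Import all_classical all_reals all_analysis.
Set Implicit Arguments. Unset Strict Implicit. Unset Printing Implicit Defensive.
Import Order.TTheory GRing.Theory Num.Theory.
Import numFieldNormedType.Exports.
Local Open Scope classical_set_scope.
Local Open Scope ring_scope.

Definition dotp {R : realType} {d : nat} (x y : 'rV[R]_d) : R :=
  \sum_(i < d) x ord0 i * y ord0 i.

Definition enorm {R : realType} {d : nat} (x : 'rV[R]_d) : R :=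
  Num.sqrt (dotp x x).

Definition convex_set_rV {R : realType} {d : nat} (X : set 'rV[R]_d) : Prop :=
  forall x y, X x -> X y -> forall l : R, 0 <= l <= 1 ->
    X (l *: x + (1 - l) *: y).

Definition is_max_on {T : Type} {R : realType} (S : set T) (f : T -> R) (m : R) : Prop :=
  (exists2 x, S x & f x = m) /\ (forall x, S x -> f x <= m).

Definition is_min_on {T : Type} {R : realType} (S : set T) (f : T -> R) (m : R) : Prop :=
  (exists2 x, S x & f x = m) /\ (forall x, S x -> m <= f x).

Definition is_proj {R : realType} {d : nat} (X : set 'rV[R]_d) (y p : 'rV[R]_d) : Prop :=
  X p /\ forall x, X x -> enorm (p - y) <= enorm (x - y).

(* duality gap of F at xb over X: max_{x in X} <F xb, xb - x>
   (a max over the compact X; written as a supremum) *)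
Definition Gap {R : realType} {d : nat} (X : set 'rV[R]_d)
  (F : 'rV[R]_d -> 'rV[R]_d) (xb : 'rV[R]_d) : R :=
  sup [set dotp (F xb) (xb - x) | x in X].

From HB Require Import structures.
From mathcomp Require Import all_boot all_order all_algebra.
From mathcomp Require Import all_classical all_reals all_analysis.
From mathcomp Require Import ring lra.
Import Order.TTheory GRing.Theory Num.Theory.
Import numFieldNormedType.Exports.
Local Open Scope classical_set_scope.
Local Open Scope ring_scope.

(* A projected ascent step p = Proj_X (y + eta g) satisfies the obtuse-angle
   inequality eta <g, z - p> <= <p - y, z - p> for every z in X.  With z = y and
   the quadratic lower bound of an L-smooth function (using eta L <= 1), the
   squared step |x_(t+1) - x_t|^2 is at most 2 eta times the increase of Phi, so
   telescoping bounds the sum of squared steps by 2 eta (Phimax - Phimin).  With z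
   arbitrary, the gap at x_t is at most (D + eta G) / eta * |x_(t+1) - x_t| plus
   D |R(x_t)|; averaging and the quadratic-mean inequality give the bound. *)

Section Euclidean.
Context {R : realType} {d : nat}.
Implicit Types (u v w : 'rV[R]_d) (a : R).

Lemma dotpC u v : dotp u v = dotp v u.
Proof. by apply: eq_bigr => i _; rewrite mulrC. Qed.

Lemma dotpDl u v w : dotp (u + v) w = dotp u w + dotp v w.
Proof. by rewrite /dotp -big_split; apply: eq_bigr => i _; rewrite !mxE mulrDl. Qed.

Lemma dotpZl a u w : dotp (a *: u) w = a * dotp u w.
Proof. by rewrite /dotp mulr_sumr; apply: eq_bigr => i _; rewrite !mxE mulrA. Qed.

Lemma dotpNl u w : dotp (- u) w = - dotp u w.
Proof. by rewrite -scaleN1r dotpZl mulN1r. Qed.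

Lemma dotpBl u v w : dotp (u - v) w = dotp u w - dotp v w.
Proof. by rewrite dotpDl dotpNl. Qed.

Lemma dotpDr u v w : dotp w (u + v) = dotp w u + dotp w v.
Proof. by rewrite dotpC dotpDl !(dotpC w). Qed.

Lemma dotpZr a u w : dotp w (a *: u) = a * dotp w u.
Proof. by rewrite dotpC dotpZl dotpC. Qed.

Lemma dotpNr u w : dotp w (- u) = - dotp w u.
Proof. by rewrite dotpC dotpNl dotpC. Qed.

Lemma dotpBr u v w : dotp w (u - v) = dotp w u - dotp w v.
Proof. by rewrite dotpDr dotpNr. Qed.

Lemma dotpp_ge0 u : 0 <= dotp u u.
Proof. by apply: sumr_ge0 => i _; rewrite -expr2 sqr_ge0. Qed.

Lemma dotpp_eq0 u : dotp u u = 0 -> u = 0.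
Proof.
move=> /eqP; rewrite psumr_eq0 => [/allP u0|i _]; last by rewrite -expr2 sqr_ge0.
apply/rowP => i; rewrite mxE.
by have /implyP/(_ isT) := u0 i (mem_index_enum _); rewrite mulf_eq0 orbb => /eqP.
Qed.

Lemma enorm_ge0 u : 0 <= enorm u.
Proof. exact: sqrtr_ge0. Qed.

Lemma enorm_sqr u : enorm u ^+ 2 = dotp u u.
Proof. by rewrite sqr_sqrtr // dotpp_ge0. Qed.

Lemma enormZ a u : enorm (a *: u) = `|a| * enorm u.
Proof.
by rewrite /enorm dotpZl dotpZr mulrA -expr2 sqrtrM ?sqr_ge0 // sqrtr_sqr.
Qed.

Lemma enormN u : enorm (- u) = enorm u.
Proof. by rewrite -scaleN1r enormZ normrN1 mul1r. Qed.

Lemma dotp_le_enorm u v : dotp u v <= enorm u * enorm v.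
Proof.
have [->|u0] := eqVneq u 0.
  by rewrite /dotp big1 ?mulr_ge0 ?enorm_ge0 // => i _; rewrite mxE mul0r.
have [->|v0] := eqVneq v 0.
  by rewrite /dotp big1 ?mulr_ge0 ?enorm_ge0 // => i _; rewrite mxE mulr0.
set a := enorm u; set b := enorm v.
have a_gt0 : 0 < a.
  by rewrite lt_def enorm_ge0 andbT sqrtr_eq0 -ltNge lt_def dotpp_ge0 andbT;
     apply: contra u0 => /eqP/dotpp_eq0 ->.
have b_gt0 : 0 < b.
  by rewrite lt_def enorm_ge0 andbT sqrtr_eq0 -ltNge lt_def dotpp_ge0 andbT;
     apply: contra v0 => /eqP/dotpp_eq0 ->.
have := dotpp_ge0 (b *: u - a *: v).
rewrite !(dotpBl, dotpBr, dotpZl, dotpZr) -!enorm_sqr -/a -/b (dotpC v u) => key.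
rewrite -(ler_pM2l (mulr_gt0 a_gt0 b_gt0)); nra.
Qed.

Lemma enorm_le_dotp u v : - (enorm u * enorm v) <= dotp u v.
Proof. by rewrite lerNl -dotpNl -(enormN u) dotp_le_enorm. Qed.

End Euclidean.

Lemma ge0_of_quadratic_ge0 {R : realFieldType} (a b : R) : 0 <= b ->
  (forall l, 0 < l <= 1 -> 0 <= l * a + l ^+ 2 * b) -> 0 <= a.
Proof.
move=> b_ge0 quad_ge0; rewrite leNgt; apply/negP => a_lt0.
have ba_gt0 : 0 < b - a by lra.
pose l := - a / (b - a).
have l_gt0 : 0 < l by rewrite divr_gt0 // oppr_gt0.
have l_le1 : l <= 1 by rewrite ler_pdivrMr // mul1r; lra.
have lba : l * (b - a) = - a by rewrite divfK // gt_eqF.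
have alb_lt0 : a + l * b < 0.
  rewrite -(pmulr_llt0 _ ba_gt0).
  have -> : (a + l * b) * (b - a) = - a ^+ 2 by rewrite mulrDl mulrAC lba; ring.
  nra.
have := quad_ge0 l; rewrite l_gt0 l_le1 => /(_ isT).
have -> : l * a + l ^+ 2 * b = l * (a + l * b) by ring.
by rewrite pmulr_rge0 // leNgt alb_lt0.
Qed.

Lemma is_proj_dotp_le0 {R : realType} {d : nat} {X : set 'rV[R]_d}
    {y p z : 'rV[R]_d} :
  convex_set_rV X -> is_proj X y p -> X z -> dotp (y - p) (z - p) <= 0.
Proof.
move=> cvxX [Xp p_min] Xz.
rewrite -oppr_ge0 -dotpNl opprB.
apply: (ge0_of_quadratic_ge0 _ (dotp (z - p) (z - p) / 2)).
  by rewrite divr_ge0 ?dotpp_ge0.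
move=> l /andP[l_gt0 l_le1].
have /p_min : X (l *: z + (1 - l) *: p) by apply: cvxX; rewrite // ltW.
have -> : l *: z + (1 - l) *: p - y = (p - y) + l *: (z - p).
  by apply/rowP => i; rewrite !mxE; ring.
set q := p - y; set h := z - p; clearbody q h.
rewrite /enorm ler_sqrt ?dotpp_ge0 // dotpDl !dotpDr !dotpZl !dotpZr (dotpC h q).
lra.
Qed.

Section SmoothLowerBound.
Context {R : realType} {d : nat}.
Context {X : set 'rV[R]_d} {Phi : 'rV[R]_d -> R} {gradPhi : 'rV[R]_d -> 'rV[R]_d} {L : R}.
Hypothesis cvxX : convex_set_rV X.
Hypothesis Phi_grad : forall y, X y ->
  differentiable Phi y /\ forall v, 'd Phi y v = dotp (gradPhi y) v.
Hypothesis gradPhi_lipschitz : forall y z, X y -> X z ->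
  enorm (gradPhi y - gradPhi z) <= L * enorm (y - z).

Lemma is_derive_along y h s : X (y + s *: h) ->
  is_derive s 1 (fun t : R => Phi (y + t *: h)) (dotp (gradPhi (y + s *: h)) h).
Proof.
move=> /Phi_grad[dPhi dPhiE].
pose line := cst y + ( *:%R ^~ h) : R -> 'rV[R]_d.
have line_diff : is_diff s line (0 + ( *:%R ^~ h)) by exact: is_diffD.
have dline : differentiable line s by case: line_diff.
have dcomp : differentiable (Phi \o line) s by exact: differentiable_comp.
have := derivableP (@diff_derivable _ _ _ _ s 1 dcomp).
by rewrite deriveE // diff_comp // diff_val /= add0r scale1r dPhiE.
Qed.

Lemma convex_set_segment y p s : X y -> X p -> 0 <= s <= 1 -> X (y + s *: (p - y)).
Proof.
move=> Xy Xp s01; have := cvxX _ _ Xp Xy s s01.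
by congr X; apply/rowP => i; rewrite !mxE; ring.
Qed.

Lemma lipschitz_grad_lower_bound y p : X y -> X p -> 0 <= L ->
  Phi y + dotp (gradPhi y) (p - y) - L / 2 * enorm (p - y) ^+ 2 <= Phi p.
Proof.
move=> Xy Xp L_ge0; set h := p - y; set a := dotp (gradPhi y) h.
set b := L / 2 * enorm h ^+ 2.
(* psi' (t) = <gradPhi (y + t h) - gradPhi y, h> + L t |h|^2 >= 0: the quadratic
   correction absorbs the Lipschitz error, which is where the factor 1/2 comes from *)
pose psi t := Phi (y + t *: h) - a * t + b * t ^+ 2.
pose dpsi t := dotp (gradPhi (y + t *: h)) h - a + b * (2 * t).
have psi_derive (t : R) : 0 <= t <= 1 -> is_derive t 1 psi (dpsi t).
  move=> t01; apply: is_deriveD; last first.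
    by apply: is_derive_eq; rewrite /GRing.scale /=; ring.
  apply: is_deriveB; first exact/is_derive_along/convex_set_segment.
  by apply: is_derive_eq; rewrite /GRing.scale /=; ring.
have [c + psi_mvt] :
    exists2 c, c \in `]0, 1[%R & psi 1 - psi 0 = dpsi c * (1 - 0).
  apply: MVT => // [t|].
    by rewrite in_itv => /andP[t_gt0 t_lt1]; apply: psi_derive; rewrite !ltW.
  apply: continuous_in_subspaceT => t; rewrite inE /= in_itv /= => t01.
  by apply/differentiable_continuous/derivable1_diffP; case: (psi_derive t t01).
rewrite in_itv /= => /andP[c_gt0 c_lt1].
have Xc : X (y + c *: h) by apply: convex_set_segment; rewrite ?ltW.
have grad_dev :
    - (L * c * enorm h ^+ 2) <= dotp (gradPhi (y + c *: h) - gradPhi y) h.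
  apply: le_trans (enorm_le_dotp _ _); rewrite lerN2 expr2 mulrA ler_wpM2r ?enorm_ge0 //.
  have := gradPhi_lipschitz _ _ Xc Xy.
  by rewrite (_ : y + c *: h - y = c *: h) ?enormZ ?gtr0_norm ?mulrA // addrAC subrr add0r.
move: psi_mvt grad_dev; rewrite /psi /dpsi /b dotpBl -/a scale1r scale0r addr0.
have -> : y + h = p by rewrite addrC subrK.
lra.
Qed.

End SmoothLowerBound.

Lemma mean_le_sqrt_mean_sqr {R : realType} {T : nat} (a : 'I_T -> R) : (0 < T)%N ->
  T%:R^-1 * \sum_(t < T) a t <= Num.sqrt (T%:R^-1 * \sum_(t < T) a t ^+ 2).
Proof.
move=> T_gt0; have T_gt0' : 0 < T%:R :> R by rewrite ltr0n.
have := dotp_le_enorm (\row_t a t) (const_mx 1 : 'rV[R]_T).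
rewrite /enorm /dotp.
under eq_bigr do rewrite !mxE mulr1.
under [X in Num.sqrt X * _]eq_bigr do rewrite !mxE -expr2.
under [X in _ * Num.sqrt X]eq_bigr do rewrite !mxE mulr1.
rewrite sumr_const card_ord => cauchy_schwarz.
rewrite sqrtrM ?invr_ge0 ?ler0n // sqrtrV ?ler0n //.
apply: le_trans (ler_wpM2l _ cauchy_schwarz) _; first by rewrite invr_ge0 ltW.
have sqrtT_neq0 : Num.sqrt T%:R != 0 :> R by rewrite gt_eqF // sqrtr_gt0.
rewrite -{1}(@sqr_sqrtr _ T%:R) ?ler0n // le_eqVlt; apply/orP; left; apply/eqP.
by field.
Qed.

Lemma Gap_le {R : realType} {d : nat} (X : set 'rV[R]_d) (F : 'rV[R]_d -> 'rV[R]_d)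
    (y : 'rV[R]_d) (c : R) :
  X !=set0 -> (forall z, X z -> dotp (F y) (y - z) <= c) -> Gap X F y <= c.
Proof.
move=> [z0 Xz0] le_c; apply: ge_sup; first by exists (dotp (F y) (y - z0)), z0.
by move=> _ [z Xz <-]; exact: le_c.
Qed.

Section ProjectedAscentStep.
Context {R : realType} {d : nat}.
Context {X : set 'rV[R]_d} {eta : R} {g y p : 'rV[R]_d}.
Hypotheses (cvxX : convex_set_rV X) (proj_p : is_proj X (y + eta *: g) p).

Lemma proj_step_dotp_le z : X z -> eta * dotp g (z - p) <= dotp (p - y) (z - p).
Proof.
move=> Xz; have := is_proj_dotp_le0 cvxX proj_p Xz.
have -> : y + eta *: g - p = eta *: g - (p - y) by apply/rowP => i; rewrite !mxE; ring.
by rewrite (dotpBl (eta *: g)) dotpZl subr_le0.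
Qed.

Lemma proj_step_sqr_le : X y -> enorm (p - y) ^+ 2 <= eta * dotp g (p - y).
Proof.
move=> /proj_step_dotp_le; rewrite -opprB !dotpNr enorm_sqr; lra.
Qed.

Lemma proj_step_dotp_bound D G z : 0 <= eta -> X z ->
    enorm (z - p) <= D -> enorm g <= G ->
  eta * dotp g (z - y) <= (D + eta * G) * enorm (p - y).
Proof.
move=> eta_ge0 Xz zp_le gG.
have -> : z - y = (z - p) + (p - y) by rewrite addrA subrK.
rewrite dotpDr mulrDr mulrDl; apply: lerD.
  apply: le_trans (proj_step_dotp_le _ Xz) _; apply: le_trans (dotp_le_enorm _ _) _.
  by rewrite mulrC ler_wpM2r ?enorm_ge0.
rewrite -mulrA ler_wpM2l //; apply: le_trans (dotp_le_enorm _ _) _.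
by rewrite ler_wpM2r ?enorm_ge0.
Qed.

End ProjectedAscentStep.

Section ProjectedGradientAscent.
Context {R : realType} {d : nat}.
Context {X : set 'rV[R]_d} {Phi : 'rV[R]_d -> R} {gradPhi : 'rV[R]_d -> 'rV[R]_d}.
Context {L eta : R} {T : nat} {x : nat -> 'rV[R]_d}.
Hypothesis cvxX : convex_set_rV X.
Hypothesis Phi_grad : forall y, X y ->
  differentiable Phi y /\ forall v, 'd Phi y v = dotp (gradPhi y) v.
Hypothesis gradPhi_lipschitz : forall y z, X y -> X z ->
  enorm (gradPhi y - gradPhi z) <= L * enorm (y - z).
Hypotheses (L_gt0 : 0 < L) (eta_gt0 : 0 < eta) (eta_le : eta <= L^-1).
Hypothesis X_x0 : X (x 0%N).
Hypothesis x_step :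
  forall t, (t < T)%N -> is_proj X (x t + eta *: gradPhi (x t)) (x t.+1).

Lemma iterate_in t : (t <= T)%N -> X (x t).
Proof. by elim: t => [//|t IHt] tT; case: (x_step _ tT). Qed.

Lemma iterate_step_sqr_le t : (t < T)%N ->
  enorm (x t.+1 - x t) ^+ 2 <= 2 * eta * (Phi (x t.+1) - Phi (x t)).
Proof.
move=> tT; have Xt := iterate_in _ (ltnW tT); have Xt1 := iterate_in _ tT.
have step_le := proj_step_sqr_le cvxX (x_step _ tT) Xt.
have := lipschitz_grad_lower_bound cvxX Phi_grad gradPhi_lipschitz
  _ _ Xt Xt1 (ltW L_gt0).
set s := enorm _ ^+ 2 in step_le *; set a := dotp _ _ in step_le * => lower_bound.
have etaLs_le : eta * (L * s) <= s.
  rewrite mulrA ler_piMl ?sqr_ge0 //.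
  by rewrite -(mulVf (lt0r_neq0 L_gt0)) ler_wpM2r // ltW.
have := ler_wpM2l (ltW eta_gt0) lower_bound; lra.
Qed.

Lemma sum_iterate_step_sqr_le :
  \sum_(t < T) enorm (x t.+1 - x t) ^+ 2 <= 2 * eta * (Phi (x T) - Phi (x 0%N)).
Proof.
rewrite -(telescope_sumr (fun t => Phi (x t))) // big_mkord mulr_sumr.
by apply: ler_sum => t _; exact: iterate_step_sqr_le.
Qed.

Lemma mean_iterate_step_le : (0 < T)%N ->
  T%:R^-1 * \sum_(t < T) enorm (x t.+1 - x t)
    <= eta * Num.sqrt (2 * (Phi (x T) - Phi (x 0%N)) / (T%:R * eta)).
Proof.
move=> T_gt0; have T_gt0' : 0 < T%:R :> R by rewrite ltr0n.
apply: le_trans (mean_le_sqrt_mean_sqr (fun t : 'I_T => enorm (x t.+1 - x t)) T_gt0) _.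
have -> : eta * Num.sqrt (2 * (Phi (x T) - Phi (x 0%N)) / (T%:R * eta))
    = Num.sqrt (T%:R^-1 * (2 * eta * (Phi (x T) - Phi (x 0%N)))).
  rewrite -[eta in eta * _]gtr0_norm // -sqrtr_sqr -sqrtrM ?sqr_ge0 //.
  by congr Num.sqrt; field; rewrite !lt0r_neq0.
have sum_ge0 : 0 <= \sum_(t < T) enorm (x t.+1 - x t) ^+ 2.
  by rewrite sumr_ge0 // => t _; rewrite sqr_ge0.
have invT_ge0 : 0 <= T%:R^-1 :> R by rewrite invr_ge0 ler0n.
rewrite ler_sqrt ?ler_wpM2l ?sum_iterate_step_sqr_le // mulr_ge0 //.
exact: le_trans sum_ge0 sum_iterate_step_sqr_le.
Qed.

Lemma Gap_iterate_le (Rf : 'rV[R]_d -> 'rV[R]_d) (D G : R) t :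
  X !=set0 -> (forall y z, X y -> X z -> enorm (y - z) <= D) ->
  (forall y, X y -> enorm (gradPhi y) <= G) -> (t < T)%N ->
  Gap X (fun y => - gradPhi y + Rf y) (x t)
    <= (D + eta * G) / eta * enorm (x t.+1 - x t) + D * enorm (Rf (x t)).
Proof.
move=> Xne diamX GX tT; have Xt := iterate_in _ (ltnW tT); have Xt1 := iterate_in _ tT.
apply: Gap_le => // z Xz; rewrite dotpDl dotpNl -dotpNr opprB lerD //.
  rewrite mulrAC ler_pdivlMr // mulrC.
  exact: proj_step_dotp_bound cvxX (x_step _ tT) _ _ _ (ltW eta_gt0) Xz
    (diamX _ _ Xz Xt1) (GX _ Xt).
apply: le_trans (dotp_le_enorm _ _) _.
by rewrite mulrC ler_wpM2r ?enorm_ge0 //; exact: diamX.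
Qed.

End ProjectedGradientAscent.

Theorem theoremF3 (R : realType) (d : nat) (X : set 'rV[R]_d)
  (Phi : 'rV[R]_d -> R) (gradPhi : 'rV[R]_d -> 'rV[R]_d)
  (Rf : 'rV[R]_d -> 'rV[R]_d)
  (L eta D G Phimax Phimin : R) (T : nat) (x : nat -> 'rV[R]_d) :
  X !=set0 -> closed X -> convex_set_rV X -> compact X ->
  is_max_on (X `*` X) (fun p => enorm (p.1 - p.2)) D ->
  (forall y, X y -> differentiable Phi y /\
     forall v, 'd Phi y v = dotp (gradPhi y) v) ->
  0 < L ->
  (forall y z, X y -> X z -> enorm (gradPhi y - gradPhi z) <= L * enorm (y - z)) ->
  is_max_on X (fun y => enorm (gradPhi y)) G ->
  is_max_on X Phi Phimax ->
  is_min_on X Phi Phimin ->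
  0 < eta -> eta <= L^-1 ->
  (0 < T)%N ->
  X (x 0%N) ->
  (forall t, (t < T)%N -> is_proj X (x t + eta *: gradPhi (x t)) (x t.+1)) ->
  let F := fun y => - gradPhi y + Rf y in
  let E_T := Num.sqrt (T%:R^-1 * \sum_(t < T) enorm (Rf (x t)) ^+ 2) in
  T%:R^-1 * \sum_(t < T) Gap X F (x t)
    <= (D + eta * G) * Num.sqrt (2 * (Phimax - Phimin) / (T%:R * eta)) + D * E_T.
Proof.
move=> Xne _ cvxX _ [[[y1 y2] _ D_def] diamX] Phi_grad L_gt0 lip.
move=> [_ GX] [_ maxPhi] [_ minPhi].
move=> eta_gt0 eta_le T_gt0 X_x0 x_step; cbv zeta.
set K := (D + eta * G) / eta.
have invT_ge0 : 0 <= T%:R^-1 :> R by rewrite invr_ge0 ler0n.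
have diam y z : X y -> X z -> enorm (y - z) <= D.
  by move=> Xy Xz; apply: (diamX (y, z)).
have G_ge0 : 0 <= G by case: Xne => y /GX; apply: le_trans (enorm_ge0 _).
have D_ge0 : 0 <= D by rewrite -D_def enorm_ge0.
have K_ge0 : 0 <= K by rewrite /K divr_ge0 ?addr_ge0 ?mulr_ge0 // ltW.
have step_mean :=
  mean_iterate_step_le cvxX Phi_grad lip L_gt0 eta_gt0 eta_le X_x0 x_step T_gt0.
have Phi_range : Phi (x T) - Phi (x 0%N) <= Phimax - Phimin.
  by apply: lerB; [apply/maxPhi/(iterate_in X_x0 x_step) | apply/minPhi].
have Gap_sum : \sum_(t < T) Gap X (fun y => - gradPhi y + Rf y) (x t)
    <= K * \sum_(t < T) enorm (x t.+1 - x t) + D * \sum_(t < T) enorm (Rf (x t)).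
  rewrite !mulr_sumr -big_split /=; apply: ler_sum => t _.
  exact: Gap_iterate_le cvxX eta_gt0 X_x0 x_step Rf D G t Xne diam GX (ltn_ord t).
have step_bound : T%:R^-1 * \sum_(t < T) enorm (x t.+1 - x t)
    <= eta * Num.sqrt (2 * (Phimax - Phimin) / (T%:R * eta)).
  apply: le_trans step_mean (ler_wpM2l (ltW eta_gt0) (ler_wsqrtr _)).
  apply: ler_wpM2r; first by rewrite invr_ge0 mulr_ge0 ?ler0n ?ltW.
  exact: ler_wpM2l.
have Rf_bound := mean_le_sqrt_mean_sqr (fun t : 'I_T => enorm (Rf (x t))) T_gt0.
apply: le_trans (ler_wpM2l invT_ge0 Gap_sum) _.
rewrite mulrDr [_ * (K * _)]mulrCA [_ * (D * _)]mulrCA lerD ?ler_wpM2l //.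
by apply: le_trans (ler_wpM2l K_ge0 step_bound) _; rewrite /K mulrA divfK ?lt0r_neq0.
Qed.
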